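(* There exist instances (users, nonnegative embedding weights, features, and a linear graph-based classifier) of the myopic best-response dynamics described below, a user $i$, and a round $t$ such that $\hat y_i^{(t)}=-1$, user $i$ does not move (i.e., $x_i^{(t+1)}=x_i^{(t)}$), yet $\hat y_i^{(t+1)}=+1$.
   Context: Users $i\in[n]$ have features $x_i\in\mathbb{R}^\ell$; embeddings $\phi(x_i;x_{-i})=\widetilde{w}_{ii}x_i+\sum_{j\neq i}\widetilde{w}_{ji}x_j$ with $\widetilde{w}_{ji}\ge0$. Classifier: $h_{\theta,b}(x_i;x_{-i})=\mathrm{sign}(\theta^\top\phi(x_i;x_{-i})+b)$, $\mathrm{sign}(0)=+1$. Cost $c(x,x')=\|x-x'\|_2$. Dynamics: $x_i^{(0)}=x_i$; at each round all users update concurrently; user $i$ changes her features only if she is currently classified $-1$ and some $x'$ with $h(x';x^{(t)}_{-i})=+1$ has $c(x_i^{(t)},x')\le2$, in which case she moves to the minimum-cost such point (embedding exactly on the decision boundary); otherwise she stays. Predictions: $\hat y_i^{(t)}=h(x_i^{(t)};x_{-i}^{(t)})$. *)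

From HB Require Import structures.
From mathcomp Require Import all_boot all_order all_algebra.
Set Implicit Arguments. Unset Strict Implicit. Unset Printing Implicit Defensive.
Import Order.TTheory GRing.Theory Num.Theory.
Local Open Scope ring_scope.

Section Dynamics.
Variable R : rcfType.

Definition dot (l : nat) (u v : 'rV[R]_l) : R := \sum_(k < l) u 0 k * v 0 k.

Definition cost (l : nat) (x y : 'rV[R]_l) : R :=
  Num.sqrt (\sum_(k < l) (x 0 k - y 0 k) ^+ 2).

(* w j i stands for the weight \tilde w_{ji}.
   embed w X i x' = \tilde w_{ii} x' + sum_{j<>i} \tilde w_{ji} X_j. *)
Definition embed (n l : nat) (w : 'I_n -> 'I_n -> R) (X : 'I_n -> 'rV[R]_l)
  (i : 'I_n) (x' : 'rV[R]_l) : 'rV[R]_l :=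
  w i i *: x' + \sum_(j < n | j != i) w j i *: X j.

Definition classify (n l : nat) (w : 'I_n -> 'I_n -> R) (theta : 'rV[R]_l) (b : R)
  (X : 'I_n -> 'rV[R]_l) (i : 'I_n) (x' : 'rV[R]_l) : int :=
  if 0 <= dot theta (embed w X i x') + b then 1 else -1.

Definition best_response (n l : nat) (w : 'I_n -> 'I_n -> R) (theta : 'rV[R]_l) (b : R)
  (X : 'I_n -> 'rV[R]_l) (i : 'I_n) (y : 'rV[R]_l) : Prop :=
  let moves := classify w theta b X i (X i) = -1 /\
               exists x', classify w theta b X i x' = 1 /\ cost (X i) x' <= 2 in
  (moves -> classify w theta b X i y = 1 /\
            forall x', classify w theta b X i x' = 1 -> cost (X i) y <= cost (X i) x')
  /\ (~ moves -> y = X i).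

Definition step (n l : nat) (w : 'I_n -> 'I_n -> R) (theta : 'rV[R]_l) (b : R)
  (X X' : 'I_n -> 'rV[R]_l) : Prop :=
  forall i, best_response w theta b X i (X' i).

Definition trajectory (n l : nat) (w : 'I_n -> 'I_n -> R) (theta : 'rV[R]_l) (b : R)
  (x0 : 'I_n -> 'rV[R]_l) (traj : nat -> 'I_n -> 'rV[R]_l) : Prop :=
  traj 0%N = x0 /\ forall t, step w theta b (traj t) (traj t.+1).

Definition prediction (n l : nat) (w : 'I_n -> 'I_n -> R) (theta : 'rV[R]_l) (b : R)
  (traj : nat -> 'I_n -> 'rV[R]_l) (t : nat) (i : 'I_n) : int :=
  classify w theta b (traj t) i (traj t i).

End Dynamics.

From HB Require Import structures.
From mathcomp Require Import all_boot all_order all_algebra.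
Import Order.TTheory GRing.Theory Num.Theory.
Local Open Scope ring_scope.

(* Two users on the real line, classified by the sign of their embedding.
   The embedding of user 0 is the feature of user 1, and that of user 1 is
   its own feature.  Starting from x_0 = 0 and x_1 = -1, both users are
   classified -1; user 0 cannot change its embedding and stays, while user 1
   moves onto the boundary 0.  In the next round user 0 is classified +1
   although it did not move. *)

Section BestResponse.
Variables (R : rcfType) (n l : nat) (w : 'I_n -> 'I_n -> R).
Variables (theta : 'rV[R]_l) (b : R) (X : 'I_n -> 'rV[R]_l) (i : 'I_n).

Let h := classify w theta b X i.

Lemma best_response_stay_pos : h (X i) = 1 -> best_response w theta b X i (X i).
Proof. by move=> hpos; split=> // -[]; rewrite -/h hpos. Qed.

Lemma best_response_stay_blocked :
  (forall x', h x' = -1) -> best_response w theta b X i (X i).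
Proof. by move=> hneg; split=> // -[_ [x' []]]; rewrite -/h hneg. Qed.

Lemma best_response_move y :
  h (X i) = -1 -> h y = 1 -> cost (X i) y <= 2 ->
  (forall x', h x' = 1 -> cost (X i) y <= cost (X i) x') ->
  best_response w theta b X i y.
Proof.
move=> hneg hy cost_y ymin; split=> // stays.
by exfalso; apply: stays; split=> //; exists y.
Qed.

End BestResponse.

Lemma cost1 (R : rcfType) (x y : 'rV[R]_1) : cost x y = `|x 0 0 - y 0 0|.
Proof. by rewrite /cost big_ord1 sqrtr_sqr. Qed.

Lemma ord2P (i : 'I_2) : i = ord0 \/ i = ord_max.
Proof. by case: i => [[|[|]]] //= ?; [left | right]; apply/val_inj. Qed.

Section CopyInstance.
Variable R : rcfType.

Definition scal (a : R) : 'rV[R]_1 := const_mx a.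

Definition w_copy (j k : 'I_2) : R := (j == ord_max)%:R.

Definition X_init (j : 'I_2) : 'rV[R]_1 := scal (if j == ord_max then -1 else 0).

Definition X_final (j : 'I_2) : 'rV[R]_1 := scal 0.

Definition traj_copy (t : nat) : 'I_2 -> 'rV[R]_1 :=
  if t is 0%N then X_init else X_final.

Lemma embed_copy (X : 'I_2 -> 'rV[R]_1) (i : 'I_2) (x' : 'rV[R]_1) :
  embed w_copy X i x' = if i == ord_max then x' else X ord_max.
Proof.
rewrite /embed /w_copy big_mkcond !big_ord_recr big_ord0 /=.
by case: i => [[|[|]]] //= ?; rewrite !(scale0r, scale1r, add0r, addr0).
Qed.

Lemma classify_copy (X : 'I_2 -> 'rV[R]_1) (i : 'I_2) (x' : 'rV[R]_1) :
  classify w_copy (scal 1) 0 X i x' =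
  if 0 <= (if i == ord_max then x' else X ord_max) 0 0 then 1 else -1.
Proof. by rewrite /classify embed_copy /dot big_ord1 mxE mul1r addr0. Qed.

Lemma step_init : step w_copy (scal 1) 0 X_init X_final.
Proof.
move=> i; case: (ord2P i) => ->.
- by apply: best_response_stay_blocked => x'; rewrite classify_copy /X_init mxE ler0N1.
- apply: best_response_move.
  + by rewrite classify_copy /X_init mxE ler0N1.
  + by rewrite classify_copy mxE lexx.
  + by rewrite cost1 /X_init /X_final !mxE subr0 normrN normr1 ler1n.
  + move=> x'; rewrite classify_copy /=; case: ifP => // x'_ge0 _.
    rewrite !cost1 /X_init /X_final !mxE subr0 normrN normr1 -opprD normrN.
    by rewrite ger0_norm ?addr_ge0 // lerDl.
Qed.

Lemma step_final : step w_copy (scal 1) 0 X_final X_final.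
Proof.
move=> i; apply: best_response_stay_pos.
by rewrite classify_copy /X_final; case: (i == ord_max); rewrite mxE lexx.
Qed.

End CopyInstance.

Theorem proposition2 (R : rcfType) :
  exists (n l : nat) (w : 'I_n -> 'I_n -> R) (theta : 'rV[R]_l) (b : R)
         (x0 : 'I_n -> 'rV[R]_l) (traj : nat -> 'I_n -> 'rV[R]_l)
         (i : 'I_n) (t : nat),
    (forall j k : 'I_n, 0 <= w j k) /\
    trajectory w theta b x0 traj /\
    prediction w theta b traj t i = -1 /\
    traj t.+1 i = traj t i /\
    prediction w theta b traj t.+1 i = 1.
Proof.
exists 2%N, 1%N, (@w_copy R), (@scal R 1), 0, (@X_init R), (@traj_copy R), ord0, 0%N.
split; first by move=> j k; exact: ler0n.
split; first by split=> // -[|t]; [exact: step_init | exact: step_final].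
by rewrite /prediction /= !classify_copy /X_init /X_final !mxE ler0N1 lexx.
Qed.
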